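(* For any finite graph $G$, if the VC-dimension of the family $\mathcal{M}(G)$ of maximal independent sets of $G$ (as subsets of $V(G)$) is $d\ge 1$, then $d\le\nu_{\mathrm{bi}}(G)$.
   Context: $\mathcal{M}(G)$ is the set system on ground set $V(G)$ consisting of all maximal independent sets of $G$ (it is the dual of the system $\mathcal{B}(G)=\{K_v\}_{v\in V(G)}$, $K_v=$ set of maximal independent sets containing $v$). The VC-dimension of a set system $\mathcal{F}$ on ground set $X$ is the largest $d$ such that some $S\subseteq X$ with $|S|=d$ satisfies: for every $B\subseteq S$ there is $A\in\mathcal{F}$ with $A\cap S=B$. $\nu_{\mathrm{bi}}(G)$ is the largest $t$ such that $G$ has $2t$ distinct vertices $u_1,\dots,u_t,v_1,\dots,v_t$ with $u_iv_j\in E(G)$ iff $i=j$. *)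

From mathcomp Require Import all_boot.
Set Implicit Arguments. Unset Strict Implicit. Unset Printing Implicit Defensive.

Definition simple_graph (T : finType) (e : rel T) : Prop :=
  symmetric e /\ irreflexive e.

Definition independent (T : finType) (e : rel T) (A : {set T}) : bool :=
  [forall x in A, forall y in A, ~~ e x y].

Definition maximal_independent (T : finType) (e : rel T) (A : {set T}) : bool :=
  independent e A && [forall B : {set T}, (A \proper B) ==> ~~ independent e B].

Definition MIS (T : finType) (e : rel T) : {set {set T}} :=
  [set A | maximal_independent e A].

Definition shattered (T : finType) (F : {set {set T}}) (S : {set T}) : Prop :=
  forall B : {set T}, B \subset S -> exists2 A, A \in F & A :&: S = B.

Definition vc_dim_eq (T : finType) (F : {set {set T}}) (d : nat) : Prop :=
  (exists S : {set T}, #|S| = d /\ shattered F S) /\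
  (forall S : {set T}, shattered F S -> #|S| <= d).

Definition has_bi (T : finType) (e : rel T) (t : nat) : Prop :=
  exists (u v : 'I_t -> T),
    injective u /\ injective v /\ (forall i j, u i != v j) /\
    (forall i j, e (u i) (v j) = (i == j)).

From mathcomp Require Import all_boot.

Set Implicit Arguments.
Unset Strict Implicit.
Unset Printing Implicit Defensive.

(* Let S be a shattered set.  The set S itself is cut out by a maximal
   independent set, so S is independent.  For s in S, a maximal independent
   set A with A :&: S = S :\ s misses s, hence by maximality contains a
   neighbour v_s of s; as A is independent and contains S :\ s, v_s is a
   neighbour of no other vertex of S.  The pairs (s, v_s) form the required
   bi-structure of size #|S|. *)

Lemma shattered_sub (T : finType) (F : {set {set T}}) (S : {set T}) :
  shattered F S -> exists2 A, A \in F & S \subset A.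
Proof.
move=> shS; have [A AF AS] := shS S (subxx S).
by exists A; rewrite // -{1}AS subsetIl.
Qed.

Section MaximalIndependentSets.

Variables (T : finType) (e : rel T).

Lemma independentP (A : {set T}) :
  reflect {in A &, forall x y, ~~ e x y} (independent e A).
Proof.
apply: (iffP forall_inP) => [indA x y xA yA | indA x xA].
  exact: (forall_inP (indA x xA)).
by apply/forall_inP => y; apply: indA.
Qed.

Lemma independentS (A B : {set T}) :
  A \subset B -> independent e B -> independent e A.
Proof.
move=> /subsetP sAB /independentP indB; apply/independentP => x y xA yA.
by apply: indB; apply: sAB.
Qed.

Lemma MIS_independent (A : {set T}) : A \in MIS e -> independent e A.
Proof. by rewrite inE => /andP[]. Qed.

Hypotheses (e_sym : symmetric e) (e_irr : irreflexive e).

Lemma MIS_dominating (A : {set T}) x :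
  A \in MIS e -> x \notin A -> exists2 y, y \in A & e x y.
Proof.
rewrite inE => /andP[/independentP indA /forallP maxA] xA.
have [/exists_inP // | /exists_inPn nxA] := boolP [exists y in A, e x y].
have /negP[] : ~~ independent e (x |: A).
  by apply: (implyP (maxA _)); rewrite setUC properUl // sub1set.
apply/independentP => y z; rewrite !in_setU1.
case/predU1P=> [-> | yA] /predU1P[-> | zA].
- by rewrite e_irr.
- exact: nxA.
- by rewrite e_sym; apply: nxA.
- exact: indA.
Qed.

Lemma shattered_MIS_independent (S : {set T}) :
  shattered (MIS e) S -> independent e S.
Proof. by case/shattered_sub => A /MIS_independent indA /independentS; apply. Qed.

Lemma shattered_MIS_private_neighbour (S : {set T}) s :
  shattered (MIS e) S -> s \in S ->
  exists2 v, e s v & {in S :\ s, forall s', ~~ e s' v}.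
Proof.
move=> shS sS; have [A AM AS] := shS (S :\ s) (subsetDl S [set s]).
have sA : s \notin A.
  by apply/negP => sA; have := setD11 s S; rewrite -AS inE sA sS.
have [v vA esv] := MIS_dominating AM sA; exists v => // s' s'S.
have s'A : s' \in A by move: s'S; rewrite -AS inE => /andP[].
exact: (independentP _ (MIS_independent AM)).
Qed.

End MaximalIndependentSets.

Lemma has_bi_private_neighbours (T : finType) (e : rel T) (S : {set T}) :
  independent e S ->
  (forall s, s \in S -> exists2 v, e s v & {in S :\ s, forall s', ~~ e s' v}) ->
  has_bi e #|S|.
Proof.
move=> /independentP indS nbrS.
pose u := @enum_val T (mem S).
have uS i : u i \in S by apply: enum_valP.
have u_inj : injective u by apply: enum_val_inj.
have [v euv nuv] := fin_all_exists2 (fun i => nbrS (u i) (uS i)).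
have e_uv i j : e (u i) (v j) = (i == j).
  have [-> | ij] := eqVneq i j; first exact: euv.
  by apply/negbTE/nuv; rewrite in_setD1 (inj_eq u_inj) ij uS.
exists u, v; split=> //; split; last split=> //.
  by move=> i j vij; apply/eqP; rewrite -e_uv -vij e_uv.
move=> i j; apply: contraNneq (indS _ _ (uS j) (uS i)) => ->.
by rewrite e_uv eqxx.
Qed.

Theorem lemma2p20 (T : finType) (e : rel T) (d : nat) :
  simple_graph e ->
  vc_dim_eq (MIS e) d -> 1 <= d ->
  exists t, d <= t /\ has_bi e t.
Proof.
move=> [e_sym e_irr] [[S [<- shS]] _] _; exists #|S|; split=> //.
apply: has_bi_private_neighbours (shattered_MIS_independent shS) _ => s.
exact: shattered_MIS_private_neighbour.
Qed.
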